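(* If $\mathcal{I}$ is an ideal on $\mathbf{N}$, then $$c_0(\mathcal{I})\cap\ell_\infty=\Big\{x\in\ell_\infty:\int_{\mathbf{N}}|x|\,\mathrm{d}\mu=0\text{ for all }\mu\in\mathrm{M}(\mathcal{I})\Big\}.$$
   Context: An ideal on $\mathbf{N}$ is a family of subsets closed under subsets and finite unions, not containing $\mathbf{N}$, and containing all finite sets. $c_0(\mathcal{I})$ is the set of real sequences $x$ with $\{n:|x_n|\ge\varepsilon\}\in\mathcal{I}$ for every $\varepsilon>0$; $\ell_\infty$ is the space of bounded real sequences. $\mathrm{M}(\mathcal{I})$ is the set of finitely additive probability measures $\mu$ on $\mathcal{P}(\mathbf{N})$ with $\mu(A)=0$ for all $A\in\mathcal{I}$, and $\int_{\mathbf{N}}x\,\mathrm{d}\mu$ is the usual integral of a bounded sequence against a finitely additive measure. *)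

From HB Require Import structures.
From mathcomp Require Import all_boot all_order all_algebra.
From mathcomp Require Import all_classical all_reals.
Set Implicit Arguments. Unset Strict Implicit. Unset Printing Implicit Defensive.
Import Order.TTheory GRing.Theory Num.Theory.
Local Open Scope classical_set_scope.
Local Open Scope ring_scope.

Definition ideal (I : set (set nat)) : Prop :=
  [/\ (forall A B : set nat, B `<=` A -> I A -> I B),
      (forall A B : set nat, I A -> I B -> I (A `|` B)),
      ~ I setT &
      (forall A : set nat, finite_set A -> I A)].

Section Defs.
Variable R : realType.

Definition c0 (I : set (set nat)) (x : nat -> R) : Prop :=
  forall eps : R, 0 < eps -> I [set n | eps <= `|x n|].

Definition bounded_seq (x : nat -> R) : Prop :=
  exists M : R, forall n, `|x n| <= M.

Definition fa_prob (mu : set nat -> R) : Prop :=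
  [/\ mu setT = 1,
      (forall A, 0 <= mu A) &
      (forall A B, A `&` B = set0 -> mu (A `|` B) = mu A + mu B)].

Definition MI (I : set (set nat)) (mu : set nat -> R) : Prop :=
  fa_prob mu /\ (forall A, I A -> mu A = 0).

Definition finite_partition (P : seq (set nat)) : Prop :=
  (forall i j, (i < j < size P)%N -> nth set0 P i `&` nth set0 P j = set0) /\
  (forall n, exists i, (i < size P)%N /\ nth set0 P i n).

Definition lower_sum (mu : set nat -> R) (x : nat -> R) (P : seq (set nat)) : R :=
  \sum_(i < size P) inf (x @` nth set0 P i) * mu (nth set0 P i).

Definition fa_integral (mu : set nat -> R) (x : nat -> R) : R :=
  sup [set lower_sum mu x P | P in finite_partition].

End Defs.

From HB Require Import structures.
From mathcomp Require Import all_boot all_order all_algebra.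
From mathcomp Require Import all_classical all_reals.
From mathcomp Require Import lra.
Set Implicit Arguments. Unset Strict Implicit. Unset Printing Implicit Defensive.
Import Order.TTheory GRing.Theory Num.Theory.
Local Open Scope classical_set_scope.
Local Open Scope ring_scope.

(* After elementary facts on finitely additive probabilities (monotonicity,
   total mass of a partition is 1) and on lower sums (nonnegativity, upper
   bounds, and bounds by the integral), the two inclusions are:
   - (c_0 => integral 0) for every eps > 0, each piece of a partition either
     has infimum < eps or lies inside the I-small set {eps <= |x|}, hence is
     mu-null; so every lower sum, hence the integral, is at most eps.
   - (integral 0 => c_0) if A = {eps <= |x|} is not in I, then the sets B
     with A \ B in I form a proper filter; the 0/1 mass of an ultrafilter
     refining it lies in M(I) and gives A mass 1, so the lower sum over the
     partition {A, ~A} forces the integral to be at least eps. *)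

Section FinitelyAdditiveProbability.
Variables (R : realType) (mu : set nat -> R).
Hypothesis hmu : fa_prob mu.

(* Additivity on the disjoint pair (set0, set0) forces the empty set to be null. *)
Lemma fa_prob0 : mu set0 = 0.
Proof.
case: hmu => _ _ add; have := add set0 set0 (setI0 _); rewrite setU0; lra.
Qed.

(* Monotonicity, from additivity on the split A = (A \ B) + B. *)
Lemma fa_prob_le (A B : set nat) : B `<=` A -> mu B <= mu A.
Proof.
case: hmu => _ pos add BA; rewrite -(setDUK BA) add ?setDIK //.
by rewrite lerDl.
Qed.

Lemma fa_prob_partition (P : seq (set nat)) : finite_partition P ->
  \sum_(i < size P) mu (nth set0 P i) = 1.
Proof.
case=> disj cov; case: (hmu) => mass1 _ add.
pose U k := [set n | exists2 i, (i < k)%N & nth set0 P i n].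
suff partial_sums k : (k <= size P)%N -> \sum_(i < k) mu (nth set0 P i) = mu (U k).
  rewrite partial_sums // -mass1; congr mu; apply/seteqP; split => n // _.
  by have [i [Hi Hn]] := cov n; exists i.
elim: k => [_|k IH Hk].
  by rewrite big_ord0 (_ : U 0%N = set0) ?fa_prob0 //; apply/seteqP; split => n [].
have U_succ : U k.+1 = U k `|` nth set0 P k.
  apply/seteqP; split => n.
    by case=> i; rewrite ltnS leq_eqVlt => /orP[/eqP ->|ik] Hn; [right|left; exists i].
  by case=> [[i ik Hn]|Hn]; [exists i => //; exact: ltnW|exists k].
rewrite big_ord_recr /= IH ?(ltnW Hk) // U_succ add //.
apply/seteqP; split => n // [[i ik Hi] Hk'].
by have /seteqP[/(_ n) + _] := disj i k (introT andP (conj ik Hk)); apply.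
Qed.

End FinitelyAdditiveProbability.

Section LowerSums.
Variables (R : realType) (mu : set nat -> R) (x : nat -> R).
Hypotheses (hmu : fa_prob mu) (x_ge0 : forall n, 0 <= x n).

(* Infima of values of a nonnegative sequence are nonnegative (inf set0 = 0). *)
Lemma inf_image_ge0 (A : set nat) : 0 <= inf (x @` A).
Proof.
have [[a Aa]|A0] := pselect (A !=set0).
  by apply: lb_le_inf; [exists (x a), a|move=> _ [n _ <-]].
by rewrite (_ : A = set0) ?image_set0 ?inf0 //; apply/seteqP; split => // a Aa; apply: A0; exists a.
Qed.

(* ... and are lower bounds, since the values are bounded below by 0. *)
Lemma inf_image_le (A : set nat) a : A a -> inf (x @` A) <= x a.
Proof. by move=> Aa; apply: ge_inf; [exists 0 => _ [n _ <-]|exists a]. Qed.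

Lemma lower_sum_ge0 (P : seq (set nat)) : 0 <= lower_sum mu x P.
Proof.
case: hmu => _ pos _; apply: sumr_ge0 => i _.
exact: mulr_ge0 (inf_image_ge0 _) (pos _).
Qed.

Lemma lower_sum_le (P : seq (set nat)) (c : R) : finite_partition P ->
  (forall i, (i < size P)%N ->
     inf (x @` nth set0 P i) * mu (nth set0 P i) <= c * mu (nth set0 P i)) ->
  lower_sum mu x P <= c.
Proof.
move=> hP piece_le; rewrite -[c]mulr1 -(fa_prob_partition hmu hP) mulr_sumr.
by apply: ler_sum => i _; apply: piece_le.
Qed.

Lemma partition_setT : finite_partition [:: @setT nat].
Proof. by split => [i [|j] /andP[] //|n]; exists 0%N. Qed.

Lemma partition_setC (A : set nat) : finite_partition [:: A; ~` A].
Proof.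
split => [i j /andP[ij jl]|n].
  by case: j ij jl => // -[|//] /=; case: i => //= _ _; exact: setICr.
by have [An|nAn] := pselect (A n); [exists 0%N|exists 1%N].
Qed.

Lemma fa_integral_le (c : R) :
  (forall P, finite_partition P -> lower_sum mu x P <= c) -> fa_integral mu x <= c.
Proof.
move=> ub; apply: ge_sup; last by move=> _ [P hP <-]; apply: ub.
by exists (lower_sum mu x [:: setT]), [:: setT]; first exact: partition_setT.
Qed.

Lemma lower_sum_le_fa_integral (M : R) (P : seq (set nat)) :
  (forall n, x n <= M) -> finite_partition P -> lower_sum mu x P <= fa_integral mu x.
Proof.
move=> xM hP; apply: ub_le_sup; last by exists P.
exists M => _ [Q hQ <-]; apply: lower_sum_le => // i _.
apply: ler_wpM2r; first by case: hmu.
have [[a Qa]|Q0] := pselect (nth set0 Q i !=set0).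
  exact: le_trans (inf_image_le Qa) (xM a).
rewrite (_ : nth set0 Q i = set0) ?image_set0 ?inf0; first exact: le_trans (xM 0%N).
by apply/seteqP; split => // a Qa; apply: Q0; exists a.
Qed.

Lemma fa_integral_ge_on (M eps : R) (A : set nat) : (forall n, x n <= M) ->
  (forall n, A n -> eps <= x n) -> eps * mu A <= fa_integral mu x.
Proof.
move=> xM xA; apply: le_trans (lower_sum_le_fa_integral xM (partition_setC A)).
rewrite /lower_sum /= !big_ord_recr big_ord0 /= add0r.
have rest_ge0 : 0 <= inf (x @` ~` A) * mu (~` A).
  by apply: mulr_ge0 (inf_image_ge0 _) _; case: hmu.
rewrite -[eps * mu A]addr0; apply: lerD rest_ge0.
have [[a Aa]|A0] := pselect (A !=set0).
  apply: ler_wpM2r; first by case: hmu.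
  by apply: lb_le_inf; [exists (x a), a|move=> _ [n An <-]; apply: xA].
rewrite (_ : A = set0) ?fa_prob0 ?mulr0 //.
by apply/seteqP; split => // a Aa; apply: A0; exists a.
Qed.

End LowerSums.

Section UltrafilterMass.
Variables (R : realType) (U : set_system nat).
Hypothesis U_ultra : UltraFilter U.

Definition ultra_mass (B : set nat) : R := if pselect (U B) then 1 else 0.

Lemma ultra_setU (B C : set nat) : U (B `|` C) -> U B \/ U C.
Proof.
move=> UBC; have [UB|UnB] := in_ultra_setVsetC B U_ultra; first by left.
by right; apply: filterS (filterI UBC UnB) => n [[]].
Qed.

Lemma ultra_disjoint (B C : set nat) : B `&` C = set0 -> U B -> U C -> False.
Proof. by move=> BC UB UC; apply: (@filter_not_empty _ U); rewrite -BC; apply: filterI. Qed.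

Lemma ultra_mass1 (B : set nat) : U B -> ultra_mass B = 1.
Proof. by rewrite /ultra_mass; case: pselect. Qed.

Lemma ultra_mass0 (B : set nat) : ~ U B -> ultra_mass B = 0.
Proof. by rewrite /ultra_mass; case: pselect. Qed.

(* Primality and properness make the 0/1 mass finitely additive. *)
Lemma ultra_mass_fa_prob : fa_prob ultra_mass.
Proof.
split=> [|B|B C BC]; first by apply: ultra_mass1; apply: filterT.
  by rewrite /ultra_mass; case: pselect.
have [UBC|nUBC] := pselect (U (B `|` C)).
  rewrite ultra_mass1 //; have [UB|UC] := ultra_setU UBC.
    by rewrite ultra_mass1 // ultra_mass0 ?addr0 // => /(ultra_disjoint BC UB).
  by rewrite [ultra_mass C]ultra_mass1 // ultra_mass0 ?add0r // => /ultra_disjoint-/(_ _ BC); apply.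
rewrite !ultra_mass0 ?addr0 // => [UC|UB]; apply: nUBC; [apply: filterS UC|apply: filterS UB];
  by [right|left].
Qed.

End UltrafilterMass.

Section IdealDualFilter.
Variables (I : set (set nat)) (A : set nat).
Hypotheses (hI : ideal I) (A_notin_I : ~ I A).

Lemma ideal_dual_filter : ProperFilter [set B | I (A `\` B)].
Proof.
case: hI => Isub Iun _ Ifin.
split; first by rewrite /= setD0.
split => [|B C IB IC|B C BC IB] /=.
- by rewrite setDT; apply: Ifin.
- by apply: Isub (Iun _ _ IB IC) => n [An /not_andP[]]; [left|right].
- by apply: Isub IB => n [An nCn]; split => // /BC.
Qed.

Lemma MI_full_mass (R : realType) : exists mu : set nat -> R, MI I mu /\ mu A = 1.
Proof.
have [U [U_ultra dual_sub]] := ultraFilterLemma ideal_dual_filter.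
have UA : U A by apply: dual_sub; rewrite /= setDv; case: hI => _ _ _ Ifin; apply: Ifin.
exists (ultra_mass R U); split; last exact: ultra_mass1.
split; first exact: ultra_mass_fa_prob.
move=> J IJ; apply: ultra_mass0 => UJ.
have UnJ : U (~` J).
  by apply: dual_sub; case: hI => Isub _ _ _; apply: Isub IJ => n [_ /contrapT].
exact: ultra_disjoint (setICr J) UJ UnJ.
Qed.

End IdealDualFilter.

Section Proposition.
Variables (R : realType) (I : set (set nat)) (x : nat -> R).
Hypothesis x_bounded : bounded_seq x.

Let abs_ge0 (n : nat) : 0 <= `|x n| := normr_ge0 (x n).

(* Inclusion c_0(I) => vanishing integrals: the integral is below every eps > 0. *)
Lemma c0_fa_integral_eq0 (mu : set nat -> R) : c0 I x -> MI I mu ->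
  fa_integral mu (fun n => `|x n|) = 0.
Proof.
move=> cx [hmu mu_I]; have [M xM] := x_bounded.
have le_eps eps : 0 < eps -> fa_integral mu (fun n => `|x n|) <= eps.
  move=> eps0; apply: fa_integral_le => P hP; apply: lower_sum_le => // i _.
  case: (ltP (inf ((fun n => `|x n|) @` nth set0 P i)) eps) => [small|large].
    by apply: ler_wpM2r; [case: hmu|exact: ltW].
  suff -> : mu (nth set0 P i) = 0 by rewrite !mulr0.
  apply: le_anti; case: (hmu) => _ -> _; rewrite andbT -(mu_I _ (cx eps eps0)).
  by apply: fa_prob_le => // n Pn; apply: le_trans large (inf_image_le abs_ge0 Pn).
have int_ge0 : 0 <= fa_integral mu (fun n => `|x n|).
  apply: le_trans (lower_sum_le_fa_integral hmu abs_ge0 xM partition_setT).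
  exact: lower_sum_ge0.
apply: le_anti; rewrite int_ge0 andbT.
by case: leP => // pos; have := le_eps _ (divr_gt0 pos (ltr0n R 2)); lra.
Qed.

(* Converse inclusion: a level set {eps <= |x|} outside I would carry full mass
   for some mu in M(I), making the integral at least eps. *)
Lemma fa_integral_eq0_c0 : ideal I ->
  (forall mu : set nat -> R, MI I mu -> fa_integral mu (fun n => `|x n|) = 0) ->
  c0 I x.
Proof.
move=> hI int0 eps eps0; apply: contrapT => notin_I.
have [mu [mu_MI muA]] := MI_full_mass hI notin_I R; have [hmu _] := mu_MI.
have [M xM] := x_bounded.
have := fa_integral_ge_on hmu abs_ge0 xM (fun n (large : eps <= `|x n|) => large).
by rewrite muA mulr1 int0 //; lra.
Qed.

End Proposition.

Theorem proposition3p3 (R : realType) (I : set (set nat)) (hI : ideal I) :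
  [set x : nat -> R | c0 I x /\ bounded_seq x] =
  [set x : nat -> R | bounded_seq x /\
     (forall mu : set nat -> R, MI I mu -> fa_integral mu (fun n => `|x n|) = 0)].
Proof.
apply/seteqP; split => x /=.
- by move=> [cx bx]; split => // mu; apply: c0_fa_integral_eq0.
- by move=> [bx int0]; split => //; apply: fa_integral_eq0_c0.
Qed.
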